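(* Let $p\in S^n$ and $T_p=\{p\}\times(S^n\setminus\{p\})\subset\tilde S^n$. There exists a homotopy equivalence $\phi\colon\tilde S^n\to S^n$, equivariant with respect to $\tau$ on $\tilde S^n$ and the antipodal involution on $S^n$, which is transversal to a $0$-sphere $S^0\subset S^n$ (a pair of antipodal points) and satisfies $\phi^{-1}(S^0)=T_p\cup\tau T_p$.
   Context: $\tilde S^n=S^n\times S^n\setminus\Delta_{S^n}$ is the deleted product, and $\tau(x,y)=(y,x)$ is the factor exchanging involution on it. *)

From HB Require Import structures.
From mathcomp Require Import all_boot all_order all_algebra.
From mathcomp Require Import all_classical all_reals all_analysis.
Import Order.TTheory GRing.Theory Num.Theory.
Import numFieldNormedType.Exports.
Local Open Scope classical_set_scope.
Local Open Scope ring_scope.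


Definition dotp {R : realType} {m : nat} (u v : 'rV[R]_m) : R := \sum_(i < m) u 0 i * v 0 i.

Definition sphere {R : realType} (n : nat) : set 'rV[R]_n.+1 := [set x | dotp x x = 1].

(* the deleted product  S^n x S^n \ Delta *)
Definition delprod {R : realType} (n : nat) : set ('rV[R]_n.+1 * 'rV[R]_n.+1) :=
  [set z | sphere n z.1 /\ sphere n z.2 /\ z.1 <> z.2].

Definition tau {R : realType} (n : nat) (z : 'rV[R]_n.+1 * 'rV[R]_n.+1) := (z.2, z.1).

Definition Tp {R : realType} (n : nat) (p : 'rV[R]_n.+1) : set ('rV[R]_n.+1 * 'rV[R]_n.+1) :=
  [set z | z.1 = p /\ sphere n z.2 /\ z.2 <> p].

Definition tangent_sphere {R : realType} (n : nat) (x : 'rV[R]_n.+1) : set 'rV[R]_n.+1 :=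
  [set w | dotp w x = 0].
Definition tangent_delprod {R : realType} (n : nat) (z : 'rV[R]_n.+1 * 'rV[R]_n.+1) :
  set ('rV[R]_n.+1 * 'rV[R]_n.+1) :=
  [set v | dotp v.1 z.1 = 0 /\ dotp v.2 z.2 = 0].


Fixpoint iterD {R : realType} {V W : normedModType R} (vs : seq V) (F : V -> W)
  : V -> W :=
  match vs with
  | [::] => F
  | v :: vs' => fun x => 'D_v (iterD vs' F) x
  end.

Definition smooth_on {R : realType} {V W : normedModType R} (U : set V)
  (F : V -> W) : Prop :=
  open U /\
  (forall (vs : seq V) (v x : V), U x -> derivable (iterD vs F) x v) /\
  (forall (vs : seq V) (x : V), U x -> {for x, continuous (iterD vs F)}).

(* a smooth map  phi : delprod n -> sphere n  (restriction of a map that is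
   smooth on an open neighbourhood of delprod n in R^(n+1) x R^(n+1)) *)
Definition smooth_delprod_to_sphere {R : realType} (n : nat)
  (phi : 'rV[R]_n.+1 * 'rV[R]_n.+1 -> 'rV[R]_n.+1) : Prop :=
  (forall z, delprod n z -> sphere n (phi z)) /\
  exists U, delprod n `<=` U /\ smooth_on U phi.

(* phi is transversal to the submanifold {q, -q} of S^n (0-dimensional, so
   the differential must be onto the tangent space at every preimage point) *)
Definition transversal_S0 {R : realType} (n : nat)
  (phi : 'rV[R]_n.+1 * 'rV[R]_n.+1 -> 'rV[R]_n.+1) (q : 'rV[R]_n.+1) : Prop :=
  forall z, delprod n z -> (phi z = q \/ phi z = - q) ->
    forall w, tangent_sphere n (phi z) w ->
      exists v, tangent_delprod n z v /\ 'D_v phi z = w.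

Definition homotopic_on (R : realType) {X : topologicalType} (A : set X)
  (B : set X) (f g : X -> X) : Prop :=
  exists H : R * X -> X,
    {within `[0, 1]%classic `*` A, continuous H} /\
    (forall t x, `[0, 1]%classic t -> A x -> B (H (t, x))) /\
    (forall x, A x -> H (0, x) = f x) /\
    (forall x, A x -> H (1, x) = g x).

Definition homotopy_equivalence (R : realType) {X Y : topologicalType}
  (A : set X) (B : set Y) (f : X -> Y) : Prop :=
  {within A, continuous f} /\ (forall x, A x -> B (f x)) /\
  exists g : Y -> X,
    {within B, continuous g} /\ (forall y, B y -> A (g y)) /\
    homotopic_on R A A (g \o f) id /\ homotopic_on R B B (f \o g) id.

From Pilot Require Import Defs.
From HB Require Import structures.
From mathcomp Require Import all_boot all_order all_algebra.
From mathcomp Require Import all_classical all_reals all_analysis.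
From mathcomp Require Import ring lra.
Import Order.TTheory GRing.Theory Num.Theory.
Import numFieldNormedType.Exports.
Local Open Scope classical_set_scope.
Local Open Scope ring_scope.

(* Fix a unit vector p and put wchord x y = (1 - <y,p>) x - (1 - <x,p>) y.  For x, y <> p
   this is (1 - <x,p>) (1 - <y,p>) (s x - s y) + (<x,p> - <y,p>) p, where s is the
   stereographic projection from p; hence wchord never vanishes on the deleted product, is
   antisymmetric, and is a multiple of p exactly when x = p or y = p.  Its direction phi is
   therefore an equivariant map to S^n with phi^-1 {p, -p} = T_p u tau T_p.  When <x,p> = 1,
   phi (x, y) = x / |x|, whose differential at x = p is the identity of the tangent space; by
   antisymmetry this gives transversality at both T_p and tau T_p.  The antipodal section
   w |-> (w, -w) is a homotopy inverse: phi (w, -w) = w, and normalising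
   l (x, y) + (1 - l) (wchord x y, wchord y x) componentwise joins (phi z, - phi z) to z inside
   the deleted product.  Smoothness holds because every map involved is built from coordinates
   by ring operations and t |-> 1/sqrt t, and a class of functions closed under directional
   derivatives consists of smooth functions. *)

Set Implicit Arguments.
Unset Strict Implicit.
Unset Printing Implicit Defensive.

Lemma scaleRE (R : pzRingType) (a b : R^o) : a *: b = a * b.
Proof. by []. Qed.

Lemma derive_lineE (R : numFieldType) (V W : normedModType R) (f : V -> W) x v :
  'D_v f x = 'D_1 (fun h : R => f (h *: v + x)) 0.
Proof.
rewrite /derive; set g1 := fun h => h^-1 *: _; set g2 := fun h => h^-1 *: _.
suff -> : g1 = g2 by [].
by rewrite funeqE /g1 /g2 => h /=; rewrite addr0 scale0r add0r [_%:A]mulr1.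
Qed.

Lemma derive_slice (R : numFieldType) (V V' W : normedModType R)
    (f : V -> W) (g : V' -> W) a b u v :
  (forall h : R, f (h *: u + a) = g (h *: v + b)) -> 'D_u f a = 'D_v g b.
Proof.
by move=> fg; rewrite (derive_lineE f) (derive_lineE g); under eq_fun do rewrite fg.
Qed.

Section SmoothFunctions.
Variables (R : realType) (V : normedModType R).
Implicit Types (U : set V) (f g : V -> R) (P : (V -> R) -> Prop).

Lemma is_derive_linear (W : normedModType R) (l : V -> W) x v :
  {morph l : a b / a + b} -> scalable l -> is_derive x v l (l v).
Proof.
move=> lD lZ.
have E : \forall h \near (0:R)^', h^-1 *: ((l \o shift x) (h *: v) - l x) = l v.
  near=> h; have h0 : h != 0 by near: h; exact: nbhs_dnbhs_neq.
  by rewrite /= lD lZ addrK scalerA mulVf // scale1r.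
split; [exact: is_cvg_near_cst E | exact: lim_near_cst E].
Unshelve. all: by end_near. Qed.

Definition rsqrt (r : R) := (Num.sqrt r)^-1.

Lemma rsqrt_gt0 (r : R) : 0 < r -> 0 < rsqrt r.
Proof. by move=> r0; rewrite /rsqrt invr_gt0 sqrtr_gt0. Qed.

Lemma is_derive_rsqrt f x v : 0 < f x -> derivable f x v ->
  is_derive x v (fun y => rsqrt (f y)) (- 2^-1 * rsqrt (f x) ^+ 3 * 'D_v f x).
Proof.
move=> fx0 df.
have sqrt_f : is_derive x v (fun y => Num.sqrt (f y))
    ((2 * Num.sqrt (f x))^-1 * 'D_v f x).
  have f_line : is_derive (0 : R) (1 : R) (fun h : R => f (h *: v + x)) ('D_v f x).
    by split; [exact: (derivable1P f x v).1 | rewrite -derive_lineE].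
  have sqrt' : is_derive (f (0 *: v + x)) 1 (@Num.sqrt R) (2 * Num.sqrt (f x))^-1.
    by rewrite scale0r add0r; exact: is_derive1_sqrt.
  have [sqrt_f_line D] := is_derive1_comp sqrt' f_line.
  by split; [exact/(derivable1P _ x v).2 | rewrite derive_lineE D].
have s0 : Num.sqrt (f x) != 0 by rewrite gt_eqF // sqrtr_gt0.
apply: DeriveDef; first exact: derivableV.
by rewrite deriveV // derive_val /rsqrt exprVn scaleRE; field.
Qed.

Definition derive_closed U P := forall f, P f ->
  [/\ forall x, U x -> {for x, continuous f},
      forall x v, U x -> derivable f x v &
      forall v, exists2 f', P f' & forall x, U x -> 'D_v f x = f' x].

Definition smooth_fun U f := exists2 P, derive_closed U P & P f.

Lemma smooth_fun_derive_closed U : derive_closed U (smooth_fun U).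
Proof.
move=> f [P cP Pf]; have [fc fd fD] := cP f Pf; split => // v.
by have [f' Pf' Df] := fD v; exists f' => //; exists P.
Qed.

Inductive rsqrt_closure U P : (V -> R) -> Prop :=
| RC_gen f of P f : rsqrt_closure U P f
| RC_cst c : rsqrt_closure U P (fun=> c)
| RC_add f g of rsqrt_closure U P f & rsqrt_closure U P g :
    rsqrt_closure U P (fun x => f x + g x)
| RC_mul f g of rsqrt_closure U P f & rsqrt_closure U P g :
    rsqrt_closure U P (fun x => f x * g x)
| RC_rsqrt f of rsqrt_closure U P f & (forall x, U x -> 0 < f x) :
    rsqrt_closure U P (fun x => rsqrt (f x)).

Lemma rsqrt_closure_derive_closed U P :
  derive_closed U P -> derive_closed U (rsqrt_closure U P).
Proof.
move=> cP g; elim=> {g}.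
- move=> f Pf; have [fc fd fD] := cP f Pf; split => // v.
  by have [f' Pf' Df] := fD v; exists f' => //; exact: RC_gen.
- move=> c; split => [x _|x v _|v]; first exact: cst_continuous.
    exact: derivable_cst.
  by exists (fun=> 0) => [|x _]; [exact: RC_cst | rewrite derive_cst].
- move=> f g _ [fc fd fD] _ [gc gd gD]; split => [x Ux|x v Ux|v].
  + by apply: continuousD; [exact: fc | exact: gc].
  + by apply: derivableD; [exact: fd | exact: gd].
  have [f' Cf' Df] := fD v; have [g' Cg' Dg] := gD v.
  exists (fun x => f' x + g' x); first exact: RC_add.
  by move=> x Ux; rewrite deriveD ?Df ?Dg //; [exact: fd | exact: gd].
- move=> f g Cf [fc fd fD] Cg [gc gd gD]; split => [x Ux|x v Ux|v].
  + by apply: continuousM; [exact: fc | exact: gc].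
  + by apply: derivableM; [exact: fd | exact: gd].
  have [f' Cf' Df] := fD v; have [g' Cg' Dg] := gD v.
  exists (fun x => f x * g' x + g x * f' x); first by apply: RC_add; exact: RC_mul.
  by move=> x Ux; rewrite deriveM ?Df ?Dg //; [exact: fd | exact: gd].
- move=> f Cf [fc fd fD] f_gt0; split => [x Ux|x v Ux|v].
  + apply: continuousV; first by rewrite gt_eqF // sqrtr_gt0 f_gt0.
    by apply: continuous_comp; [exact: fc | exact: sqrt_continuous].
  + exact: (is_derive_rsqrt (f_gt0 x Ux) (fd x v Ux)).(ex_derive).
  have [f' Cf' Df] := fD v.
  exists (fun x => - 2^-1 * (rsqrt (f x) * (rsqrt (f x) * rsqrt (f x))) * f' x).
    apply: RC_mul => //; apply: RC_mul; first exact: RC_cst.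
    by do 2?apply: RC_mul; exact: RC_rsqrt.
  move=> x Ux; rewrite (is_derive_rsqrt (f_gt0 x Ux) (fd x v Ux)).(derive_val).
  by rewrite Df // !exprS expr0 mulr1.
Qed.

Lemma smooth_fun_closure U f : rsqrt_closure U (smooth_fun U) f -> smooth_fun U f.
Proof.
exists (rsqrt_closure U (smooth_fun U)) => //.
exact/rsqrt_closure_derive_closed/smooth_fun_derive_closed.
Qed.

Lemma smooth_fun_cst U c : smooth_fun U (fun=> c).
Proof. exact/smooth_fun_closure/RC_cst. Qed.

Lemma smooth_funD U f g : smooth_fun U f -> smooth_fun U g ->
  smooth_fun U (fun x => f x + g x).
Proof. by move=> sf sg; apply/smooth_fun_closure/RC_add; exact: RC_gen. Qed.

Lemma smooth_funM U f g : smooth_fun U f -> smooth_fun U g ->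
  smooth_fun U (fun x => f x * g x).
Proof. by move=> sf sg; apply/smooth_fun_closure/RC_mul; exact: RC_gen. Qed.

Lemma smooth_funN U f : smooth_fun U f -> smooth_fun U (fun x => - f x).
Proof.
move=> sf; have := smooth_funM (smooth_fun_cst U (-1)) sf.
by under eq_fun do rewrite mulN1r.
Qed.

Lemma smooth_funB U f g : smooth_fun U f -> smooth_fun U g ->
  smooth_fun U (fun x => f x - g x).
Proof. by move=> sf sg; apply: smooth_funD => //; exact: smooth_funN. Qed.

Lemma smooth_fun_rsqrt U f : smooth_fun U f -> (forall x, U x -> 0 < f x) ->
  smooth_fun U (fun x => rsqrt (f x)).
Proof. by move=> sf f_gt0; apply/smooth_fun_closure/RC_rsqrt => //; exact: RC_gen. Qed.

Lemma smooth_fun_sum U m (F : 'I_m -> V -> R) : (forall i, smooth_fun U (F i)) ->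
  smooth_fun U (fun x => \sum_(i < m) F i x).
Proof.
elim: m F => [|m IH] F sF.
  by under eq_fun do rewrite big_ord0; exact: smooth_fun_cst.
under eq_fun do rewrite big_ord_recr /=.
by apply: smooth_funD => //; exact: (IH (fun i => F (widen_ord (leqnSn m) i))).
Qed.

Lemma smooth_fun_linear U (l : V -> R) : continuous l ->
  {morph l : a b / a + b} -> scalable l -> smooth_fun U l.
Proof.
move=> lC lD lZ; exists (fun g => g = l \/ exists c, g = fun=> c); last by left.
move=> g [->|[c ->]]; split => [x _|x v _|v].
- exact: lC.
- exact: (is_derive_linear x v lD lZ).(ex_derive).
- exists (fun=> l v); first by right; exists (l v).
  by move=> x _; exact: (is_derive_linear x v lD lZ).(derive_val).
- exact: cst_continuous.
- exact: derivable_cst.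
- by exists (fun=> 0) => [|x _]; [right; exists 0 | rewrite derive_cst].
Qed.

End SmoothFunctions.

Lemma near_eq_continuous (R : numFieldType) (T : topologicalType)
    (W : normedModType R) (f g : T -> W) x :
  (\near x, f x = g x) -> {for x, continuous f} -> {for x, continuous g}.
Proof.
move=> fg cf; rewrite /prop_for /continuous_at -(nbhs_singleton fg).
exact: cvg_trans (near_eq_cvg fg) cf.
Qed.

Lemma continuous_row (R : realType) (T : topologicalType) m (A : T -> 'rV[R]_m) x :
  (forall j, {for x, continuous (fun t => A t 0 j)}) -> {for x, continuous A}.
Proof.
move=> cA; have -> : A = fun t => \sum_(j < m) A t 0 j *: 'e_j.
  by apply/funext => t; rewrite [LHS]row_sum_delta.
by apply: (cvg_big add_continuous) => // j _; exact: continuousZr_tmp.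
Qed.

Section SmoothRows.
Variables (R : realType) (V : normedModType R) (U : set V) (m : nat).
Implicit Types A B : V -> 'rV[R]_m.

Definition smooth_row A := forall j, smooth_fun U (fun x => A x 0 j).

Lemma smooth_row_cst (c : 'rV[R]_m) : smooth_row (fun=> c).
Proof. by move=> j; exact: smooth_fun_cst. Qed.

Lemma smooth_rowD A B : smooth_row A -> smooth_row B -> smooth_row (fun x => A x + B x).
Proof. by move=> sA sB j; under eq_fun do rewrite mxE; exact: smooth_funD. Qed.

Lemma smooth_rowN A : smooth_row A -> smooth_row (fun x => - A x).
Proof. by move=> sA j; under eq_fun do rewrite mxE; exact: smooth_funN. Qed.

Lemma smooth_rowB A B : smooth_row A -> smooth_row B -> smooth_row (fun x => A x - B x).
Proof. by move=> sA sB; apply: smooth_rowD => //; exact: smooth_rowN. Qed.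

Lemma smooth_rowZ (k : V -> R) A : smooth_fun U k -> smooth_row A ->
  smooth_row (fun x => k x *: A x).
Proof. by move=> sk sA j; under eq_fun do rewrite mxE; exact: smooth_funM. Qed.

Lemma smooth_fun_dotp A B : smooth_row A -> smooth_row B ->
  smooth_fun U (fun x => dotp (A x) (B x)).
Proof. by move=> sA sB; apply: smooth_fun_sum => j; exact: smooth_funM. Qed.

Lemma smooth_row_linear A : continuous A -> {morph A : a b / a + b} -> scalable A ->
  smooth_row A.
Proof.
move=> AC AD AZ j; apply: smooth_fun_linear => [x|a b|k a] /=.
- exact: (continuous_comp (AC x) (@coord_continuous R 1 m 0 j (A x))).
- by rewrite AD mxE.
- by rewrite AZ mxE.
Qed.

Lemma smooth_row_continuous A x : smooth_row A -> U x -> {for x, continuous A}.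
Proof.
move=> sA Ux; apply: continuous_row => j.
by have [c _ _] := smooth_fun_derive_closed (sA j); exact: c.
Qed.

Lemma smooth_row_iterD A : open U -> smooth_row A -> forall vs : seq V,
  exists2 G : 'I_m -> V -> R, (forall j, smooth_fun U (G j)) &
    forall x, U x -> Defs.iterD vs A x = \row_j G j x.
Proof.
move=> oU sA; elim => [|v vs [G sG AG]].
  by exists (fun j x => A x 0 j) => // x _; apply/rowP => j; rewrite mxE.
have [G' DG] : {G' : 'I_m -> V -> R & forall j,
    smooth_fun U (G' j) /\ forall x, U x -> 'D_v (G j) x = G' j x}.
  apply: (@boolp.choice _ _ (fun j g' =>
    smooth_fun U g' /\ forall x, U x -> 'D_v (G j) x = g' x)) => j.
  by have [_ _ /(_ v) [g' sg' Dg]] := smooth_fun_derive_closed (sG j); exists g'.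
exists G' => [j|x Ux /=]; first exact: (DG j).1.
have nearAG : \near x, Defs.iterD vs A x = \row_j G j x.
  by apply: filterS (open_nbhs_nbhs (conj oU Ux)) => y; exact: AG.
rewrite (near_eq_derive _ nearAG) derive_mx.
  apply/rowP => j; rewrite !mxE; under eq_fun do rewrite mxE.
  exact: (DG j).2.
apply/derivable_mxP => i j; under eq_fun do rewrite mxE.
by have [_ d _] := smooth_fun_derive_closed (sG j); exact: d.
Qed.

Lemma smooth_row_smooth_on A : open U -> smooth_row A -> smooth_on U A.
Proof.
move=> oU sA; split => //; split => [vs v x Ux|vs x Ux];
  have [G sG AG] := smooth_row_iterD oU sA vs;
  have nearGA : \near x, \row_j G j x = Defs.iterD vs A x by
    apply: filterS (open_nbhs_nbhs (conj oU Ux)) => y /AG.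
- apply: (near_eq_derivable nearGA).
  apply/derivable_mxP => i j; under eq_fun do rewrite mxE.
  by have [_ d _] := smooth_fun_derive_closed (sG j); exact: d.
- apply: (near_eq_continuous nearGA); apply: continuous_row => j.
  have -> : (fun t => (\row_j G j t) 0 j) = G j by apply/funext => t; rewrite mxE.
  by have [c _ _] := smooth_fun_derive_closed (sG j); exact: c.
Qed.

End SmoothRows.

Section Euclidean.
Variables (R : realType) (m : nat).
Implicit Types (u v w x y : 'rV[R]_m) (c k : R).

Lemma dotpC u v : dotp u v = dotp v u.
Proof. by apply: eq_bigr => i _; rewrite mulrC. Qed.

Lemma dotpDl u v w : dotp (u + v) w = dotp u w + dotp v w.
Proof. by rewrite /dotp -big_split; apply: eq_bigr => i _; rewrite mxE mulrDl. Qed.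

Lemma dotpZl k u v : dotp (k *: u) v = k * dotp u v.
Proof. by rewrite /dotp mulr_sumr; apply: eq_bigr => i _; rewrite mxE mulrA. Qed.

Lemma dotpNl u v : dotp (- u) v = - dotp u v.
Proof. by rewrite -scaleN1r dotpZl mulN1r. Qed.

Lemma dotpBl u v w : dotp (u - v) w = dotp u w - dotp v w.
Proof. by rewrite dotpDl dotpNl. Qed.

Lemma dotpDr u v w : dotp w (u + v) = dotp w u + dotp w v.
Proof. by rewrite dotpC dotpDl !(dotpC w). Qed.

Lemma dotpZr k u v : dotp v (k *: u) = k * dotp v u.
Proof. by rewrite dotpC dotpZl dotpC. Qed.

Lemma dotpNr u v : dotp v (- u) = - dotp v u.
Proof. by rewrite dotpC dotpNl dotpC. Qed.

Lemma dotpBr u v w : dotp w (u - v) = dotp w u - dotp w v.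
Proof. by rewrite dotpDr dotpNr. Qed.

Lemma dotp0l u : dotp 0 u = 0.
Proof. by rewrite -(scale0r 0) dotpZl mul0r. Qed.

Lemma dotpp_ge0 u : 0 <= dotp u u.
Proof. by apply: sumr_ge0 => i _; rewrite -expr2 sqr_ge0. Qed.

Lemma dotpp_eq0 u : (dotp u u == 0) = (u == 0).
Proof.
apply/eqP/eqP => [uu0|->]; last exact: dotp0l.
apply/rowP => j; rewrite mxE; apply/eqP; rewrite -sqrf_eq0 expr2.
have sq_ge0 (i : 'I_m) : true -> 0 <= u 0 i * u 0 i by rewrite -expr2 sqr_ge0.
exact/eqP/(psumr_eq0P sq_ge0 uu0).
Qed.

Lemma dotpp_gt0 u : u != 0 -> 0 < dotp u u.
Proof. by move=> u0; rewrite lt_def dotpp_eq0 u0 dotpp_ge0. Qed.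

Lemma dotpp_subr x y : dotp x x = 1 -> dotp y y = 1 ->
  dotp (x - y) (x - y) = 2 - 2 * dotp x y.
Proof. by move=> xx yy; rewrite !dotpBl !dotpBr xx yy (dotpC y x); ring. Qed.

Lemma dotp_unit_le1 x y : dotp x x = 1 -> dotp y y = 1 -> dotp x y <= 1.
Proof. by move=> xx yy; have := dotpp_ge0 (x - y); rewrite dotpp_subr //; lra. Qed.

Lemma dotp_unit_eq1 x y : dotp x x = 1 -> dotp y y = 1 -> dotp x y = 1 -> x = y.
Proof.
move=> xx yy xy1; apply/eqP; rewrite -subr_eq0 -dotpp_eq0 dotpp_subr // xy1.
by apply/eqP; ring.
Qed.

Lemma dotp_unit_lt1 x y : dotp x x = 1 -> dotp y y = 1 -> x <> y -> dotp x y < 1.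
Proof.
move=> xx yy xy; rewrite lt_neqAle dotp_unit_le1 // andbT.
by apply/eqP => /(dotp_unit_eq1 xx yy).
Qed.

Lemma unit_scale_eq0 x y c k : dotp x x = 1 -> dotp y y = 1 -> x <> y ->
  0 <= c -> 0 <= k -> c *: x = k *: y -> c = 0 /\ k = 0.
Proof.
move=> xx yy xy c0 k0 cxky.
have ck : c = k.
  have : dotp (c *: x) (c *: x) = dotp (k *: y) (k *: y) by rewrite cxky.
  rewrite !dotpZl !dotpZr xx yy !mulr1 => /eqP.
  by rewrite -subr_eq0 -!expr2 subr_sqr mulf_eq0 => /orP[] /eqP; lra.
subst k; suff c_eq0 : c = 0 by [].
have [//|c_neq0] := eqVneq c 0.
by case: xy; exact: scalerI c_neq0 _ _ cxky.
Qed.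

Definition normalize w := rsqrt (dotp w w) *: w.

Lemma normalize_unit w : w != 0 -> dotp (normalize w) (normalize w) = 1.
Proof.
move=> w0; have ww := dotpp_gt0 w0.
rewrite dotpZl dotpZr mulrA /rsqrt -invfM -expr2 sqr_sqrtr ?ltW //.
by rewrite mulVf // gt_eqF.
Qed.

Lemma normalize_id w : dotp w w = 1 -> normalize w = w.
Proof. by move=> ww; rewrite /normalize ww /rsqrt sqrtr1 invr1 scale1r. Qed.

Lemma normalizeZ c w : 0 < c -> normalize (c *: w) = normalize w.
Proof.
move=> c0; rewrite /normalize dotpZl dotpZr mulrA -expr2 /rsqrt sqrtrM ?sqr_ge0 //.
rewrite sqrtr_sqr gtr0_norm // scalerA invfM mulrAC mulVf ?gt_eqF //.
by rewrite mul1r.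
Qed.

Lemma normalizeK w : w != 0 -> Num.sqrt (dotp w w) *: normalize w = w.
Proof.
move=> w0; rewrite /normalize scalerA /rsqrt mulfV ?scale1r //.
by rewrite gt_eqF // sqrtr_gt0 dotpp_gt0.
Qed.

Lemma normalizeN w : normalize (- w) = - normalize w.
Proof. by rewrite /normalize dotpNl dotpNr opprK scalerN. Qed.

Lemma normalize_inj_ray u v : u != 0 -> v != 0 -> normalize u = normalize v ->
  exists2 k, 0 < k & u = k *: v.
Proof.
move=> u0 v0 uv; have ru := rsqrt_gt0 (dotpp_gt0 u0).
exists ((rsqrt (dotp u u))^-1 * rsqrt (dotp v v)).
  by apply: mulr_gt0; [rewrite invr_gt0 | exact/rsqrt_gt0/dotpp_gt0].
by rewrite -scalerA -/(normalize v) -uv scalerA mulVf ?scale1r ?gt_eqF.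
Qed.

Lemma is_derive_coord x v j : is_derive x v (fun y => y 0 j) (v 0 j).
Proof. by apply: is_derive_linear => [a b|k a]; rewrite mxE. Qed.

Lemma is_derive_dotpp x v : is_derive x v (fun y => dotp y y) (2 * dotp x v).
Proof.
have := is_derive_sum (fun j =>
  is_deriveM (is_derive_coord x v j) (is_derive_coord x v j)).
rewrite fct_sumE => /is_derive_eq; apply.
by rewrite /dotp mulr_sumr; apply: eq_bigr => j _; rewrite scaleRE mulr_natl.
Qed.

Lemma is_derive_normalize x v : x != 0 -> is_derive x v normalize
  (rsqrt (dotp x x) *: v - (rsqrt (dotp x x) ^+ 3 * dotp x v) *: x).
Proof.
move=> x0; have dotpp' := is_derive_dotpp x v.
have D := is_derive_rsqrt (f := fun y => dotp y y) (dotpp_gt0 x0) dotpp'.(ex_derive).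
rewrite dotpp'.(derive_val) in D.
have Dj j := is_deriveM D (is_derive_coord x v j).
have DN : derivable normalize x v.
  apply/derivable_mxP => i j; rewrite (ord1 i).
  under eq_fun do rewrite mxE; exact: (Dj j).(ex_derive).
apply: DeriveDef => //; rewrite derive_mx //; apply/rowP => j.
rewrite !mxE; under eq_fun do rewrite mxE.
by rewrite (Dj j).(derive_val) !scaleRE; field.
Qed.

Lemma is_derive_normalize_tangent x v : dotp x x = 1 -> dotp x v = 0 ->
  is_derive x v normalize v.
Proof.
move=> xx xv; have x0 : x != 0 by rewrite -dotpp_eq0 xx oner_neq0.
have D := is_derive_normalize v x0; apply: is_derive_eq D _.
by rewrite xx xv /rsqrt sqrtr1 invr1 scale1r mulr0 scale0r subr0.
Qed.

End Euclidean.

Lemma smooth_row_normalize (R : realType) (V : normedModType R) (U : set V) m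
    (A : V -> 'rV[R]_m) :
  smooth_row U A -> (forall x, U x -> A x != 0) ->
  smooth_row U (fun x => normalize (A x)).
Proof.
move=> sA A0; apply: smooth_rowZ => //; apply: smooth_fun_rsqrt.
  exact: smooth_fun_dotp.
by move=> x Ux; exact/dotpp_gt0/A0.
Qed.

Lemma homotopic_on_id (R : realType) (X : topologicalType) (A : set X) (f : X -> X) :
  (forall x, A x -> f x = x) -> homotopic_on R A A f id.
Proof.
move=> fA; exists snd; split.
  by apply: continuous_in_subspaceT => w _; exact: cvg_snd.
by split => [t x _ //|]; split => x Ax //=; rewrite fA.
Qed.

Lemma continuous_pair_at (T U W : topologicalType) (f : T -> U) (g : T -> W) x :
  {for x, continuous f} -> {for x, continuous g} ->
  {for x, continuous (fun t => (f t, g t))}.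
Proof. by move=> cf cg; exact: (@cvg_pair _ _ _ (nbhs x) _ _ _ _ _ f g cf cg). Qed.

Lemma in_itv01 (R : realType) (t : R) : `[0, 1]%classic t -> 0 <= t <= 1.
Proof. by rewrite /= in_itv. Qed.

Section AntipodalMap.
Variables (R : realType) (n : nat) (p : 'rV[R]_n.+1).
Hypothesis p_unit : dotp p p = 1.
Local Notation vec := 'rV[R]_n.+1.
Implicit Types (x y w : vec) (z : vec * vec).

Definition wchord x y := (1 - dotp y p) *: x - (1 - dotp x p) *: y.

Definition phi z := normalize (wchord z.1 z.2).

Definition homotopy_vec (l : R) x y := l *: x + (1 - l) *: wchord x y.

Lemma wchord_swap x y : wchord y x = - wchord x y.
Proof. by rewrite /wchord opprB. Qed.

Lemma homotopy_vec_neq_scale l k x y : dotp x x = 1 -> dotp y y = 1 -> x <> y ->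
  0 <= l <= 1 -> 0 <= k -> homotopy_vec l x y != k *: homotopy_vec l y x.
Proof.
move=> xx yy xy /andP[l0 l1] k0; apply/eqP => hom_eq.
have sx := dotp_unit_le1 xx p_unit; have sy := dotp_unit_le1 yy p_unit.
have a0 : 0 <= (1 + k) * ((1 - l) * (1 - dotp y p)).
  by rewrite !mulr_ge0 // ?subr_ge0 // addr_ge0.
have b0 : 0 <= (1 + k) * ((1 - l) * (1 - dotp x p)).
  by rewrite !mulr_ge0 // ?subr_ge0 // addr_ge0.
have : (l + (1 + k) * ((1 - l) * (1 - dotp y p))) *: x -
       (k * l + (1 + k) * ((1 - l) * (1 - dotp x p))) *: y =
       homotopy_vec l x y - k *: homotopy_vec l y x.
  by apply/rowP => j; rewrite /homotopy_vec /wchord !mxE; ring.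
rewrite hom_eq subrr => /eqP; rewrite subr_eq0 => /eqP.
move/(unit_scale_eq0 xx yy xy (addr_ge0 l0 a0) (addr_ge0 (mulr_ge0 k0 l0) b0)).
case=> la kb; have l_eq0 : l = 0 by lra.
move: la kb; rewrite l_eq0 mulr0 subr0 !mul1r !add0r => /eqP + /eqP.
rewrite !mulf_eq0 => /orP[|/eqP yp1]; first by move/eqP; lra.
case/orP=> [|/eqP xp1]; first by move/eqP; lra.
have xp : x = p by apply: (dotp_unit_eq1 xx p_unit); lra.
have yp : y = p by apply: (dotp_unit_eq1 yy p_unit); lra.
by case: xy; rewrite xp yp.
Qed.

Lemma homotopy_vec_neq0 l x y : dotp x x = 1 -> dotp y y = 1 -> x <> y ->
  0 <= l <= 1 -> homotopy_vec l x y != 0.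
Proof.
move=> xx yy xy l01.
by have := homotopy_vec_neq_scale xx yy xy l01 (lexx 0); rewrite scale0r.
Qed.

Lemma normalize_homotopy_vec_neq l x y : dotp x x = 1 -> dotp y y = 1 -> x <> y ->
  0 <= l <= 1 -> normalize (homotopy_vec l x y) <> normalize (homotopy_vec l y x).
Proof.
move=> xx yy xy l01 hom_eq.
have [k k0] := normalize_inj_ray (homotopy_vec_neq0 xx yy xy l01)
  (homotopy_vec_neq0 yy xx (nesym xy) l01) hom_eq.
by apply/eqP; exact: homotopy_vec_neq_scale (ltW k0).
Qed.

Lemma wchord_neq0 x y : dotp x x = 1 -> dotp y y = 1 -> x <> y -> wchord x y != 0.
Proof.
move=> xx yy xy; have := homotopy_vec_neq0 (l := 0) xx yy xy.
by rewrite lexx ler01 /homotopy_vec scale0r add0r subr0 scale1r; apply.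
Qed.

Lemma wchord_eq_scale x y mu : dotp x x = 1 -> dotp y y = 1 -> x <> y ->
  wchord x y = mu *: p -> x = p \/ y = p.
Proof.
move=> xx yy xy F_mu; set s := dotp x p; set t := dotp y p.
have mu_st : mu = s - t.
  have := congr1 (dotp^~ p) F_mu; rewrite /= dotpZl p_unit mulr1 => <-.
  by rewrite /wchord dotpBl !dotpZl -/s -/t; ring.
have : (1 - t) *: (x - p) - (1 - s) *: (y - p) = wchord x y - mu *: p.
  by apply/rowP => j; rewrite /wchord !mxE -/s -/t mu_st; ring.
rewrite F_mu subrr => /eqP; rewrite subr_eq0 => /eqP chords.
have : (1 - t) * (1 - s) * (s - t) = 0.
  have := congr1 (fun u => dotp u u) chords.
  by rewrite /= !dotpZl !dotpZr !dotpp_subr // -/s -/t; nra.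
move/eqP; rewrite !mulf_eq0 => /orP[/orP[]|] /eqP st.
- by right; apply: (dotp_unit_eq1 yy p_unit); rewrite -/t; lra.
- by left; apply: (dotp_unit_eq1 xx p_unit); rewrite -/s; lra.
have [t1|t_neq1] := eqVneq t 1; first by right; exact: (dotp_unit_eq1 yy p_unit).
have s_t : s = t by lra.
case: xy; apply: (addIr (- p)); apply: (scalerI (a := 1 - t)).
  by rewrite subr_eq0 eq_sym.
by rewrite chords s_t.
Qed.

Lemma wchord_l x y : dotp x p = 1 -> wchord x y = (1 - dotp y p) *: x.
Proof. by move=> xp; rewrite /wchord xp subrr scale0r subr0. Qed.

Lemma phi_l x y : dotp x p = 1 -> dotp y p < 1 -> phi (x, y) = normalize x.
Proof. by move=> xp yp; rewrite /phi wchord_l // normalizeZ // subr_gt0. Qed.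

Lemma phi_tau z : phi (tau n z) = - phi z.
Proof. by rewrite /phi /= wchord_swap normalizeN. Qed.

Lemma phi_r x y : dotp y p = 1 -> dotp x p < 1 -> phi (x, y) = - normalize y.
Proof. by move=> yp xp; rewrite -[(x, y)]/(tau n (y, x)) phi_tau phi_l. Qed.

Lemma phi_p_l y : dotp y y = 1 -> y <> p -> phi (p, y) = p.
Proof. by move=> yy yp; rewrite phi_l ?normalize_id ?dotp_unit_lt1. Qed.

Lemma phi_p_r x : dotp x x = 1 -> x <> p -> phi (x, p) = - p.
Proof. by move=> xx xp; rewrite phi_r ?normalize_id ?dotp_unit_lt1. Qed.

Lemma phi_sphere z : delprod n z -> sphere n (phi z).
Proof. by case: z => x y [xx [yy xy]]; exact/normalize_unit/wchord_neq0. Qed.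

Lemma phi_eq_pm x y : dotp x x = 1 -> dotp y y = 1 -> x <> y ->
  phi (x, y) = p \/ phi (x, y) = - p -> x = p \/ y = p.
Proof.
move=> xx yy xy phi_pm; have := normalizeK (wchord_neq0 xx yy xy).
rewrite -/(phi (x, y)); case: phi_pm => -> F_eq.
  exact: (wchord_eq_scale xx yy xy (esym F_eq)).
rewrite scalerN -scaleNr in F_eq; exact: (wchord_eq_scale xx yy xy (esym F_eq)).
Qed.

Definition phi_dom := [set z | 0 < dotp (wchord z.1 z.2) (wchord z.1 z.2)].

Lemma delprod_phi_dom z : delprod n z -> phi_dom z.
Proof. by case: z => x y [xx [yy xy]]; exact/dotpp_gt0/wchord_neq0. Qed.

Lemma smooth_row_wchord (V : normedModType R) (U : set V) (X Y : V -> vec) :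
  smooth_row U X -> smooth_row U Y -> smooth_row U (fun v => wchord (X v) (Y v)).
Proof.
move=> sX sY; apply: smooth_rowB; apply: smooth_rowZ => //; apply: smooth_funB;
  by [exact: smooth_fun_cst | exact: smooth_fun_dotp (smooth_row_cst _ _)].
Qed.

Lemma smooth_row_wchord_pair (U : set (vec * vec)) :
  smooth_row U (fun z => wchord z.1 z.2).
Proof.
apply: smooth_row_wchord; apply: smooth_row_linear => // z;
  by [exact: cvg_fst | exact: cvg_snd].
Qed.

Lemma phi_dom_open : open phi_dom.
Proof.
have [c _ _] := smooth_fun_derive_closed (smooth_fun_dotp (smooth_row_wchord_pair setT)
  (smooth_row_wchord_pair setT)).
by apply: (open_comp (D := [set r : R | 0 < r])) => [z _|]; [exact: c | exact: open_gt].
Qed.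

Lemma smooth_row_phi : smooth_row phi_dom phi.
Proof.
apply: smooth_row_normalize; first exact: smooth_row_wchord_pair.
by move=> z; apply: contraTneq => ->; rewrite dotp0l ltxx.
Qed.

Lemma phi_smooth : smooth_delprod_to_sphere n phi.
Proof.
split; first exact: phi_sphere.
exists phi_dom; split; first exact: delprod_phi_dom.
exact: smooth_row_smooth_on phi_dom_open smooth_row_phi.
Qed.

Definition antipodal_section w : vec * vec := (w, - w).

Lemma antipodal_section_delprod w : sphere n w -> delprod n (antipodal_section w).
Proof.
rewrite /sphere /= => ww; split => //; split.
  by rewrite /sphere /= dotpNl dotpNr opprK.
by move=> /(congr1 (dotp w)); rewrite dotpNr ww => ?; lra.
Qed.

Lemma phi_antipodal_section w : sphere n w -> phi (antipodal_section w) = w.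
Proof.
rewrite /sphere /phi /= => ww; have -> : wchord w (- w) = 2 *: w.
  by apply/rowP => j; rewrite /wchord dotpNl !mxE; ring.
by rewrite normalizeZ ?ltr0n // normalize_id.
Qed.

Lemma antipodal_section_continuous : continuous antipodal_section.
Proof. by move=> w; apply: continuous_pair_at => //; exact: continuousN. Qed.

Lemma phi_continuous : {within delprod n, continuous phi}.
Proof.
apply: continuous_in_subspaceT => z; rewrite inE => /delprod_phi_dom.
exact: smooth_row_continuous smooth_row_phi.
Qed.

Definition phi_homotopy (w : R * (vec * vec)) : vec * vec :=
  (normalize (homotopy_vec w.1 w.2.1 w.2.2), normalize (homotopy_vec w.1 w.2.2 w.2.1)).

Lemma phi_homotopy_continuous :
  {within `[0, 1]%classic `*` delprod n, continuous phi_homotopy}.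
Proof.
set U := `[0, 1]%classic `*` delprod n.
have sX : smooth_row U (fun w : R * (vec * vec) => w.2.1).
  apply: smooth_row_linear => // w.
  by apply: (continuous_comp (f := snd)); [exact: cvg_snd | exact: cvg_fst].
have sY : smooth_row U (fun w : R * (vec * vec) => w.2.2).
  apply: smooth_row_linear => // w.
  by apply: (continuous_comp (f := snd)); exact: cvg_snd.
have sL : smooth_fun U (fun w : R * (vec * vec) => w.1).
  by apply: smooth_fun_linear => // w; exact: cvg_fst.
have s_hom (X Y : R * (vec * vec) -> vec) : smooth_row U X -> smooth_row U Y ->
    smooth_row U (fun u => homotopy_vec u.1 (X u) (Y u)).
  move=> sX' sY'; apply: smooth_rowD; apply: smooth_rowZ => //.
    by apply: smooth_funB => //; exact: smooth_fun_cst.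
  exact: smooth_row_wchord.
unfold phi_homotopy; apply: continuous_in_subspaceT => u; rewrite inE => Uu.
apply: (continuous_pair_at (f := fun u => normalize (homotopy_vec u.1 u.2.1 u.2.2))
  (g := fun u => normalize (homotopy_vec u.1 u.2.2 u.2.1)));
  apply: (smooth_row_continuous (U := U)) => //;
  apply: smooth_row_normalize => [|[t [x y]] [/in_itv01 t01 [xx [yy xy]]]].
- exact: s_hom sX sY.
- exact: homotopy_vec_neq0.
- exact: s_hom sY sX.
- exact: homotopy_vec_neq0 yy xx (nesym xy) t01.
Qed.

Lemma phi_homotopy_delprod t z : `[0, 1]%classic t -> delprod n z ->
  delprod n (phi_homotopy (t, z)).
Proof.
case: z => x y /in_itv01 t01 [xx [yy xy]]; split; [|split].
- exact/normalize_unit/homotopy_vec_neq0.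
- exact/normalize_unit/(homotopy_vec_neq0 yy xx (nesym xy)).
- exact: normalize_homotopy_vec_neq.
Qed.

Lemma section_phi_homotopic :
  homotopic_on R (delprod n) (delprod n) (antipodal_section \o phi) id.
Proof.
exists phi_homotopy; split; first exact: phi_homotopy_continuous.
split; first by move=> t z; exact: phi_homotopy_delprod.
split=> [[x y] _|[x y] [xx [yy _]]]; rewrite /phi_homotopy /homotopy_vec /=.
- by rewrite subr0 !scale0r !add0r !scale1r [wchord y x]wchord_swap normalizeN.
- by rewrite subrr !scale0r !addr0 !scale1r !normalize_id.
Qed.

Lemma phi_homotopy_equivalence : homotopy_equivalence R (delprod n) (sphere n) phi.
Proof.
split; first exact: phi_continuous.
split; first exact: phi_sphere.
exists antipodal_section; split.
  exact/continuous_subspaceT/antipodal_section_continuous.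
split; first exact: antipodal_section_delprod.
split; first exact: section_phi_homotopic.
by apply: homotopic_on_id => w; exact: phi_antipodal_section.
Qed.

Lemma derive_phi_l y w : dotp y y = 1 -> y <> p -> dotp w p = 0 ->
  'D_(w, 0) phi (p, y) = w.
Proof.
move=> yy yp wp; have -> : 'D_(w, 0) phi (p, y) = 'D_w (fun u => normalize u) p.
  apply: derive_slice => h.
  have -> : h *: (w, 0) + (p, y) = (h *: w + p, h *: 0 + y) by [].
  rewrite scaler0 add0r phi_l ?dotp_unit_lt1 //.
  by rewrite dotpDl dotpZl wp mulr0 add0r.
by rewrite (is_derive_normalize_tangent p_unit (etrans (dotpC _ _) wp)).(derive_val).
Qed.

Lemma derive_phi_r x w : dotp x x = 1 -> x <> p -> dotp w p = 0 ->
  'D_(0, - w) phi (x, p) = w.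
Proof.
move=> xx xp wp; have -> : 'D_(0, - w) phi (x, p) = 'D_(- w) (fun u => - normalize u) p.
  apply: derive_slice => h.
  have -> : h *: (0, - w) + (x, p) = (h *: 0 + x, h *: - w + p) by [].
  rewrite scaler0 add0r phi_r ?dotp_unit_lt1 //.
  by rewrite dotpDl dotpZl dotpNl wp oppr0 mulr0 add0r.
have tangent : dotp p (- w) = 0 by rewrite dotpNr dotpC wp oppr0.
apply: etrans _ (opprK w).
exact: (is_deriveN (is_derive_normalize_tangent p_unit tangent)).(derive_val).
Qed.

Lemma phi_transversal : transversal_S0 n phi p.
Proof.
move=> [x y] [/= xx [yy xy]] phi_pm w; rewrite /tangent_sphere /tangent_delprod /=.
have [xp|yp] := phi_eq_pm xx yy xy phi_pm; subst.
- rewrite phi_p_l //; last exact/nesym.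
  move=> wp; exists (w, 0); split; first by rewrite dotp0l.
  by apply: derive_phi_l => //; exact/nesym.
- rewrite phi_p_r // dotpNr => /eqP; rewrite oppr_eq0 => /eqP wp.
  exists (0, - w); split; first by rewrite dotp0l dotpNl wp oppr0.
  exact: derive_phi_r.
Qed.

Lemma phi_preimage :
  [set z | delprod n z /\ (phi z = p \/ phi z = - p)] = Tp n p `|` tau n @` Tp n p.
Proof.
apply/seteqP; split.
  move=> [x y] [[/= xx [yy xy]] phi_pm].
  have [xp|yp] := phi_eq_pm xx yy xy phi_pm; subst; [left | right].
    by split => //; split => //; exact/nesym.
  by exists (p, x).
move=> [x y] [[/= -> [yy yp]] | [[a b] [/= -> [bb bp]] [<- <-]]].
  by split; [split; [|split; [|exact/nesym]] | left; exact: phi_p_l].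
by split; [split | right; exact: phi_p_r].
Qed.

End AntipodalMap.

Theorem lemma8 (R : realType) (n : nat) (p : 'rV[R]_n.+1) :
  sphere n p ->
  exists (q : 'rV[R]_n.+1) (phi : 'rV[R]_n.+1 * 'rV[R]_n.+1 -> 'rV[R]_n.+1),
    sphere n q /\
    smooth_delprod_to_sphere n phi /\
    homotopy_equivalence R (delprod n) (sphere n) phi /\
    (forall z, delprod n z -> phi (tau n z) = - phi z) /\
    transversal_S0 n phi q /\
    [set z | delprod n z /\ (phi z = q \/ phi z = - q)] = Tp n p `|` tau n @` Tp n p.
Proof.
move=> p_unit; exists p, (phi p); split => //.
split; first exact: phi_smooth.
split; first exact: phi_homotopy_equivalence.
split; first by move=> z _; exact: phi_tau.
split; first exact: phi_transversal.
exact: phi_preimage.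
Qed.
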